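(* Let $n\ge 1$, let $\gamma_1,\dots,\gamma_{n+1}\in\mathbb{C}$, and let $s_1,\dots,s_{n+1}$ be sufficiently differentiable functions of $z$. Then $$W^{\gamma_n,\gamma_{n+1}}_2\Big(W^{\gamma_1,\dots,\gamma_n}_n(s_1,\dots,s_n),\ W^{\gamma_1,\dots,\gamma_{n-1},\gamma_{n+1}}_n(s_1,\dots,s_{n-1},s_{n+1})\Big)=W^{\gamma_1,\dots,\gamma_{n-1}}_{n-1}(s_1,\dots,s_{n-1})\;W^{\gamma_1,\dots,\gamma_{n+1}}_{n+1}(s_1,\dots,s_{n+1}).$$
   Context: For constants $\gamma_i$ put $\nabla_i=\partial_z+\gamma_i$. For $k\ge1$ the twisted Wronskian of functions $f_1,\dots,f_k$ with twists $\gamma_{i_1},\dots,\gamma_{i_k}$ is the determinant $$W^{\gamma_{i_1},\dots,\gamma_{i_k}}_k(f_1,\dots,f_k)=\det_{1\le a,b\le k}\big[(\partial_z+\gamma_{i_a})^{b-1}f_a\big];$$ in particular $W^{\alpha,\beta}_2(f,g)=f\,(g'+\beta g)-g\,(f'+\alpha f)$. By convention the Wronskian of the empty family ($k=0$) equals $1$. *)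

From HB Require Import structures.
From mathcomp Require Import all_boot all_order all_algebra.
From mathcomp Require Import complex.
From mathcomp Require Import all_classical all_reals all_analysis.
Set Implicit Arguments. Unset Strict Implicit. Unset Printing Implicit Defensive.
Import Order.TTheory GRing.Theory Num.Theory numFieldNormedType.Exports.
Local Open Scope ring_scope.

(* The complex numbers R[i] (R a real number field) viewed as a normed
   vector space over themselves, with the modulus as norm; this gives the
   usual topology, so that [derive1] is the complex derivative d/dz. *)
Section complex_normed.
Variable R : rcfType.
HB.instance Definition _ := GRing.ComAlgebra.copy R[i] R[i]^o.
HB.instance Definition _ := Vector.copy R[i] R[i]^o.
HB.instance Definition _ := NormedModule.copy R[i] R[i]^o.
End complex_normed.

Definition nabla (R : realType) (g : R[i]) (f : R[i] -> R[i]) : R[i] -> R[i] :=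
  fun z => derive1 f z + g * f z.

(* Twisted Wronskian with families indexed 1..k:
   twW k g f z = det_{1<=a,b<=k} [ (d/dz + g a)^(b-1) (f a) ] (z).
   For k = 0 the determinant of the empty matrix is 1. *)
Definition twW (R : realType) (k : nat) (g : nat -> R[i])
  (f : nat -> R[i] -> R[i]) : R[i] -> R[i] :=
  fun z => \det (\matrix_(a < k, b < k) iter b (nabla (g a.+1)) (f a.+1) z).

(* Differentiating row a turns nabla_a^b s_a into nabla_a^(b+1) s_a - gamma_a nabla_a^b s_a,
   so W' + (gamma_1 + ... + gamma_n) W is the determinant whose last column is
   raised to nabla^n.  In the outer 2x2 Wronskian the twists therefore cancel and
   what remains is W V# - W# V, where V is W with its last row built from
   s_(n+1) and gamma_(n+1), and # raises the last column.  These four determinants are the four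
   bordered minors of the (n+1)x(n+1) matrix [nabla_a^b s_a], so the
   Desnanot-Jacobi identity turns the expression into W_(n-1) W_(n+1).
   Desnanot-Jacobi itself follows from the Schur complement when the leading
   block is invertible, and in general by a generic perturbation of that block. *)

From HB Require Import structures.
From mathcomp Require Import all_boot all_order all_algebra.
From mathcomp Require Import complex perm ring zify.
From mathcomp Require Import all_classical all_reals all_analysis.
Set Implicit Arguments.
Unset Strict Implicit.
Unset Printing Implicit Defensive.
Import GRing.Theory numFieldNormedType.Exports.
Local Open Scope ring_scope.

Section DeterminantExpansion.
Variable F : comRingType.

Definition detn m (X : nat -> nat -> F) : F := \det (\matrix_(i < m, j < m) X i j).

Definition bordered_minor k (X : nat -> nat -> F) (i j : nat) : F :=
  detn k.+1 (fun a b => X (if a == k then i else a) (if b == k then j else b)).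

Lemma bordered_minor_kk k X : bordered_minor k X k k = detn k.+1 X.
Proof.
by congr (\det _); apply/matrixP => a b; rewrite !mxE; do 2 case: eqP => [->|_].
Qed.

Lemma bordered_minor_row k X i j :
  bordered_minor k (fun a b => X (if a == k then i else a) b) k j =
  bordered_minor k X i j.
Proof.
congr (\det _); apply/matrixP => a b; rewrite !mxE.
by case: (nat_of_ord a =P k) => [e|/eqP/negbTE ne]; rewrite /= ?e ?ne ?eqxx.
Qed.

Lemma det_mx22 (A : 'M[F]_2) : \det A = A 0 0 * A 1 1 - A 0 1 * A 1 0.
Proof.
rewrite (expand_det_row _ 0) !big_ord_recl big_ord0 addr0 /cofactor !det_mx11.
rewrite !mxE /= expr0 expr1 !mul1r mulN1r mulrN.
by congr (A _ _ * A _ _ - A _ _ * A _ _); apply: val_inj.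
Qed.

Lemma expand_det_subst_row m (x w : nat -> nat -> F) (a : 'I_m) :
  \det (\matrix_(i < m, j < m) if i == a then w i j else x i j) =
  \sum_(j < m) w a j * cofactor (\matrix_(i < m, j < m) x i j) a j.
Proof.
rewrite (expand_det_row _ a); apply: eq_bigr => j _; rewrite mxE eqxx.
congr (_ * (_ * \det _)); apply/matrixP => i l; rewrite !mxE.
by rewrite eq_sym (negbTE (neq_lift a i)).
Qed.

Lemma expand_det_subst_col m (x w : nat -> nat -> F) (b : 'I_m) :
  \det (\matrix_(i < m, j < m) if j == b then w i j else x i j) =
  \sum_(i < m) w i b * cofactor (\matrix_(i < m, j < m) x i j) i b.
Proof.
rewrite (expand_det_col _ b); apply: eq_bigr => i _; rewrite mxE eqxx.
congr (_ * (_ * \det _)); apply/matrixP => l j; rewrite !mxE.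
by rewrite eq_sym (negbTE (neq_lift b j)).
Qed.

(* Expanding each summand along its modified row and regrouping by columns, the
   sum becomes a sum over b of determinants whose column b is replaced by column
   b+1; all of these have two equal columns except the last one. *)
Lemma sum_det_shift_row k (x : nat -> nat -> F) :
  \sum_(a < k.+1) \det (\matrix_(i < k.+1, j < k.+1) if i == a then x i j.+1 else x i j)
  = bordered_minor k x k k.+1.
Proof.
under eq_bigr do rewrite (@expand_det_subst_row _ x (fun i j => x i j.+1)).
rewrite exchange_big big_ord_recr big1 => [|j _].
  rewrite -(@expand_det_subst_col _ x (fun i j => x i j.+1)) /= add0r.
  congr (\det _); apply/matrixP => i j; rewrite !mxE -val_eqE /=.
  by case: eqP => [->|_]; case: eqP => [->|].
have jk : (j.+1 < k.+1)%N by rewrite ltnS ltn_ord.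
have ne : widen_ord (leqnSn k) j != Ordinal jk by apply/eqP => /(congr1 val)/n_Sn.
rewrite -(@expand_det_subst_col _ x (fun i _ => x i j.+1)).
rewrite -det_tr; apply: (determinant_alternate ne) => i.
by rewrite !mxE eqxx eq_sym (negbTE ne).
Qed.

Lemma sum_det_shift_rowB k (x : nat -> nat -> F) (c : nat -> F) :
  \sum_(a < k.+1)
     \det (\matrix_(i < k.+1, j < k.+1) if i == a then x i j.+1 - c i * x i j else x i j)
  = bordered_minor k x k k.+1 - (\sum_(a < k.+1) c a) * detn k.+1 x.
Proof.
rewrite -sum_det_shift_row mulr_suml -sumrB; apply: eq_bigr => a _.
rewrite (@expand_det_subst_row _ x (fun i j => x i j.+1 - c i * x i j)).
rewrite (@expand_det_subst_row _ x (fun i j => x i j.+1)).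
rewrite /detn (expand_det_row _ a) mulr_sumr -sumrB.
by apply: eq_bigr => j _; rewrite mxE mulrBl -mulrA.
Qed.
End DeterminantExpansion.

Lemma det_block_schur_adj (F : comRingType) k q (A : 'M[F]_k) (B : 'M[F]_(k, q))
    (C : 'M[F]_(q, k)) (D : 'M[F]_q) :
  \det (block_mx A B C D) * \det A ^+ q = \det A * \det (\det A *: D - C *m \adj A *m B).
Proof.
have reduce : block_mx A B C D *m block_mx 1%:M (- (\adj A *m B)) 0 (\det A)%:M
    = block_mx A 0 C (\det A *: D - C *m \adj A *m B).
  rewrite mulmx_block !mulmx1 !mulmx0 !addr0 !mulmxN mulmxA mul_mx_adj.
  by rewrite mul_scalar_mx !mul_mx_scalar addNr addrC mulmxA.
have := congr1 determinant reduce.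
by rewrite det_mulmx det_lblock det_ublock det1 mul1r det_scalar.
Qed.

Section DesnanotJacobi.
Variable F : idomainType.

Definition block_minor k (A : 'M[F]_k) (B : 'M[F]_(k, 2)) (C : 'M[F]_(2, k))
    (D : 'M[F]_2) (i j : 'I_2) : F :=
  \det (block_mx A (col j B) (row i C) (D i j)%:M).

Lemma block_minor_schur k (A : 'M[F]_k) B C D i j : \det A != 0 ->
  block_minor A B C D i j = (\det A *: D - C *m \adj A *m B) i j.
Proof.
move=> dA; apply: (mulfI dA).
rewrite -[X in X * _ = _]expr1 mulrC det_block_schur_adj det_mx11; congr (_ * _).
rewrite !mxE eqxx mulr1n; congr (_ - _); apply: eq_bigr => t _.
by rewrite !mxE; congr (_ * _); apply: eq_bigr => u _; rewrite !mxE.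
Qed.

Lemma desnanot_jacobi_block_unit k (A : 'M[F]_k) B C D : \det A != 0 ->
  \det A * \det (block_mx A B C D) =
  block_minor A B C D 0 0 * block_minor A B C D 1 1
  - block_minor A B C D 0 1 * block_minor A B C D 1 0.
Proof.
move=> dA; rewrite !block_minor_schur // -det_mx22; apply: (mulfI dA).
by rewrite mulrA -expr2 mulrC det_block_schur_adj.
Qed.
End DesnanotJacobi.

(* Replace A by the generic matrix 'X + A over {poly F}, whose determinant is a
   monic polynomial, then evaluate at 0. *)
Lemma desnanot_jacobi_block (F : idomainType) k (A : 'M[F]_k) B C D :
  \det A * \det (block_mx A B C D) =
  block_minor A B C D 0 0 * block_minor A B C D 1 1
  - block_minor A B C D 0 1 * block_minor A B C D 1 0.
Proof.
pose Ax := char_poly_mx (- A).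
have Ax_neq0 : \det Ax != 0 by apply/monic_neq0/char_poly_monic.
have Ax0 : map_mx (horner_eval 0) Ax = A.
  apply/matrixP => i j; rewrite !mxE horner_evalE.
  by rewrite hornerD hornerN hornerMn hornerX mul0rn hornerC sub0r opprK.
have polyCK m n (M : 'M[F]_(m, n)) : map_mx (horner_eval 0) (map_mx polyC M) = M.
  by apply/matrixP => i j; rewrite !mxE horner_evalE hornerC.
have := desnanot_jacobi_block_unit (map_mx polyC B) (map_mx polyC C) (map_mx polyC D) Ax_neq0.
move/(congr1 (horner_eval 0)).
rewrite /block_minor !rmorphB !rmorphM -!det_map_mx !map_block_mx !map_scalar_mx.
rewrite -!map_col -!map_row !polyCK Ax0 => ->.
by rewrite !mxE /= !horner_evalE !hornerC.
Qed.

Lemma detn_add (F : comRingType) p q (X : nat -> nat -> F) :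
  detn (p + q) X =
  \det (block_mx (\matrix_(i < p, j < p) X i j) (\matrix_(i < p, j < q) X i (p + j)%N)
                 (\matrix_(i < q, j < p) X (p + i)%N j)
                 (\matrix_(i < q, j < q) X (p + i)%N (p + j)%N)).
Proof.
congr (\det _); apply/matrixP => i j; rewrite mxE -(fintype.splitK i) -(fintype.splitK j).
by case: (fintype.split i) => i'; case: (fintype.split j) => j';
  rewrite ?block_mxEul ?block_mxEur ?block_mxEdl ?block_mxEdr mxE.
Qed.

Lemma desnanot_jacobi (F : idomainType) k (X : nat -> nat -> F) :
  bordered_minor k X k k * bordered_minor k X k.+1 k.+1
  - bordered_minor k X k k.+1 * bordered_minor k X k.+1 k
  = detn k X * detn k.+2 X.
Proof.
pose A := \matrix_(i < k, j < k) X i j.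
pose B := \matrix_(i < k, j < 2) X i (k + j)%N.
pose C := \matrix_(i < 2, j < k) X (k + i)%N j.
pose D := \matrix_(i < 2, j < 2) X (k + i)%N (k + j)%N.
have minorE (i j : 'I_2) :
    block_minor A B C D i j = bordered_minor k X (k + i)%N (k + j)%N.
  rewrite /bordered_minor -addn1 detn_add; congr (\det (block_mx _ _ _ _));
    apply/matrixP => a b; rewrite ?(ord1 a) ?(ord1 b) !mxE /= ?addn0 ?eqxx ?mulr1n
      ?(ltn_eqF (ltn_ord a)) ?(ltn_eqF (ltn_ord b)) //.
have := desnanot_jacobi_block A B C D.
rewrite !minorE /= addn0 addn1 -[k.+2]addn2 detn_add => <-.
by rewrite mulrC.
Qed.

Section DeriveDeterminant.
Variables (K : numFieldType) (V : normedModType K).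

Lemma is_derive_bigsum (W : normedModType K) (I : finType) (h : I -> V -> W)
    (dh : I -> W) (x v : V) :
  (forall i, is_derive x v (h i) (dh i)) ->
  is_derive x v (fun y => \sum_i h i y) (\sum_i dh i).
Proof.
move=> hdh; rewrite -fct_sumE; elim/big_ind2 : _ => // [|f df g dg dfg dgg].
- exact: is_derive_cst.
- exact: is_deriveD.
Qed.

Lemma is_derive_bigprod m (h : 'I_m -> V -> K) (dh : 'I_m -> K) (x v : V) :
  (forall i, is_derive x v (h i) (dh i)) ->
  is_derive x v (fun y => \prod_i h i y)
    (\sum_(j < m) \prod_(i < m) if i == j then dh i else h i x).
Proof.
elim: m h dh => [|m IHm] h dh hdh.
  rewrite big_ord0 (_ : (fun=> _) = cst 1); last by apply/funext => y; rewrite big_ord0.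
  exact: is_derive_cst.
pose wd (i : 'I_m) := widen_ord (leqnSn m) i.
have wd_max i : (wd i == ord_max) = false by rewrite -val_eqE /= ltn_eqF.
rewrite (_ : (fun y => _) = (fun y => \prod_(i < m) h (wd i) y) * h ord_max); last first.
  by apply/funext => y; rewrite big_ord_recr.
apply: is_derive_eq; first exact: is_deriveM (IHm _ _ (fun i => hdh (wd i))) (hdh ord_max).
rewrite big_ord_recr /= big_ord_recr /= eqxx addrC; congr (_ + _).
  by rewrite /GRing.scale /=; congr (_ * _); apply: eq_bigr => i _; rewrite wd_max.
rewrite /GRing.scale /= mulr_sumr; apply: eq_bigr => j _.
by rewrite big_ord_recr /= eq_sym wd_max mulrC.
Qed.

Lemma is_derive_det m (M : 'I_m -> 'I_m -> V -> K) (x v : V) :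
  (forall i j, derivable (M i j) x v) ->
  is_derive x v (fun y => \det (\matrix_(i, j) M i j y))
    (\sum_(a < m) \det (\matrix_(i, j) if i == a then 'D_v (M i j) x else M i j x)).
Proof.
move=> dM; rewrite (_ : (fun y => _) =
    fun y => \sum_(s : 'S_m) (-1) ^+ s * \prod_i M i (s i) y); last first.
  apply/funext => y; apply: eq_bigr => s _.
  by congr (_ * _); apply: eq_bigr => i _; rewrite mxE.
apply: is_derive_eq.
  apply: is_derive_bigsum => s; apply: is_deriveZ.
  exact: is_derive_bigprod (fun i => derivableP (dM i (s i))).
under eq_bigr do rewrite scaler_sumr.
rewrite exchange_big; apply: eq_bigr => a _; apply: eq_bigr => s _.
rewrite /GRing.scale /=; congr (_ * _); apply: eq_bigr => i _; rewrite mxE.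
by case: (i == a).
Qed.
End DeriveDeterminant.

Section Smooth.
Variable K : numFieldType.

Definition smooth (f : K -> K) := forall k x, derivable (derive1n k f) x 1.

Lemma smooth_derive1 f : smooth f -> smooth (derive1 f).
Proof. by move=> sf k x; rewrite -derive1Sn. Qed.

Lemma derive1nD k (f h : K -> K) : smooth f -> smooth h ->
  derive1n k (f \+ h) = derive1n k f \+ derive1n k h.
Proof.
move=> sf sh; elim: k => [//|k IHk].
rewrite !derive1nS IHk; apply/funext => x /=; rewrite !derive1E.
exact: deriveD (sf k x) (sh k x).
Qed.

Lemma derive1nZ k c (f : K -> K) : smooth f ->
  derive1n k (c \*o f) = c \*o derive1n k f.
Proof.
move=> sf; elim: k => [//|k IHk].
rewrite !derive1nS IHk; apply/funext => x /=; rewrite !derive1E.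
exact: deriveMl (sf k x).
Qed.

Lemma smoothD f h : smooth f -> smooth h -> smooth (f \+ h).
Proof. by move=> sf sh k x; rewrite derive1nD //; apply: derivableD. Qed.

Lemma smoothZ c f : smooth f -> smooth (c \*o f).
Proof.
by move=> sf k x; rewrite derive1nZ //; apply: derivableM => //; apply: derivable_cst.
Qed.
End Smooth.

Section TwistedWronskian.
Variable R : realType.
Local Notation C := R[i].

Lemma smooth_nabla g (f : C -> C) : smooth f -> smooth (nabla g f).
Proof. by move=> sf; apply: smoothD; [apply: smooth_derive1 | apply: smoothZ]. Qed.

Lemma smooth_iter_nabla b g (f : C -> C) : smooth f -> smooth (iter b (nabla g) f).
Proof. by move=> sf; elim: b => [//|b IHb] /=; apply: smooth_nabla. Qed.

Lemma twW2E (g : nat -> C) f z :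
  twW 2 g f z = f 1%N z * nabla (g 2%N) (f 2%N) z - nabla (g 1%N) (f 1%N) z * f 2%N z.
Proof. by rewrite /twW det_mx22 !mxE. Qed.

Lemma derive1_twW k (g : nat -> C) (f : nat -> C -> C) z :
  (forall a, (a <= k)%N -> smooth (f a.+1)) ->
  derive1 (twW k.+1 g f) z =
  bordered_minor k (fun a b => iter b (nabla (g a.+1)) (f a.+1) z) k k.+1
  - (\sum_(a < k.+1) g a.+1) * twW k.+1 g f z.
Proof.
move=> sf; rewrite derive1E.
rewrite -(@sum_det_shift_rowB _ k (fun a b => iter b (nabla (g a.+1)) (f a.+1) z)
                                  (fun a => g a.+1)) /twW.
have dM (i j : 'I_k.+1) : derivable (iter j (nabla (g i.+1)) (f i.+1)) z 1.
  exact: smooth_iter_nabla (sf i (ltn_ord i)) 0%N z.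
rewrite (@derive_val _ _ _ _ _ _ _ (is_derive_det dM)); apply: eq_bigr => a _.
congr (\det _); apply/matrixP => i j; rewrite !mxE; case: eqP => // _.
by rewrite -derive1E /= /nabla addrK.
Qed.
End TwistedWronskian.

Theorem mainTheorem4 (R : realType) (n : nat) (gamma : nat -> R[i])
  (s : nat -> R[i] -> R[i]) :
  (0 < n)%N ->
  (forall i k (z : R[i]), (1 <= i <= n.+1)%N ->
     derivable (derive1n k (s i)) z 1) ->
  forall z : R[i],
    twW 2 (fun j => if j == 1%N then gamma n else gamma n.+1)
          (fun j => if j == 1%N then twW n gamma s
                    else twW n (fun i => if i == n then gamma n.+1 else gamma i)
                               (fun i => if i == n then s n.+1 else s i)) z
    = twW n.-1 gamma s z * twW n.+1 gamma s z.
Proof.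
case: n => [//|k] _ s_smooth z /=.
set gamma' := fun i => if i == k.+1 then gamma k.+2 else gamma i.
set s' := fun i => if i == k.+1 then s k.+2 else s i.
have smooth_s i : (i <= k)%N -> smooth (s i.+1).
  by move=> ik j w; apply: s_smooth; lia.
have smooth_s' i : (i <= k)%N -> smooth (s' i.+1).
  by move=> ik j w; rewrite /s'; case: eqP => _; apply: s_smooth; lia.
rewrite twW2E /= /nabla (derive1_twW gamma z smooth_s) (derive1_twW gamma' z smooth_s').
set X := fun a b => iter b (nabla (gamma a.+1)) (s a.+1) z.
have X' : (fun a b => iter b (nabla (gamma' a.+1)) (s' a.+1) z) =
          (fun a b => X (if a == k then k.+1 else a) b).
  by apply/funext => a; apply/funext => b; rewrite /gamma' /s' /X eqSS; case: eqP.
have sum_gamma' : \sum_(a < k.+1) gamma' a.+1 =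
                  \sum_(a < k.+1) gamma a.+1 - gamma k.+1 + gamma k.+2.
  rewrite !big_ord_recr /= /gamma' eqxx addrK; congr (_ + _).
  by apply: eq_bigr => a _; rewrite eqSS ltn_eqF.
rewrite X' sum_gamma' bordered_minor_row.
have -> : twW k.+1 gamma' s' z = bordered_minor k X k.+1 k.
  by rewrite -bordered_minor_row bordered_minor_kk -X'.
have -> : twW k.+1 gamma s z = bordered_minor k X k k by rewrite bordered_minor_kk.
rewrite -[RHS]/(detn k X * detn k.+2 X) -desnanot_jacobi.
(* abstracting the minors keeps [ring] from unfolding the determinants *)
move: (bordered_minor k X) (\sum_(a < k.+1) gamma a.+1) => M S; ring.
Qed.
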